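(* Let $G$ be a non-complete double-critical $k$-chromatic graph. Then every vertex of $G$ has at least $k+1$ neighbours.
   Context: All graphs are finite and simple. A graph $G$ is (vertex-)critical if $\chi(G-v)<\chi(G)$ for every vertex $v\in V(G)$. A critical graph $G$ is double-critical if $\chi(G-x-y)\le\chi(G)-2$ for every edge $xy\in E(G)$. *)

From mathcomp Require Import all_boot.
Set Implicit Arguments. Unset Strict Implicit. Unset Printing Implicit Defensive.

Record sgraph := SGraph {
  vert :> finType;
  adj : rel vert;
  adj_sym : symmetric adj;
  adj_irr : irreflexive adj }.

Section Chrom.
Variable G : sgraph.

Definition colorable (S : {set G}) (k : nat) : bool :=
  [exists f : {ffun G -> 'I_k},
     [forall x in S, forall y in S, adj x y ==> (f x != f y)]].

Lemma ex_colorable (S : {set G}) : exists k, colorable S k.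
Proof.
exists #|G|; apply/existsP; exists [ffun x => enum_rank x].
apply/forallP => x; apply/implyP => _; apply/forallP => y; apply/implyP => _.
apply/implyP => exy; rewrite !ffunE; apply/negP => /eqP/enum_rank_inj exy'.
by move: exy; rewrite exy' adj_irr.
Qed.

Definition chi_set (S : {set G}) : nat := ex_minn (ex_colorable S).

Definition chromatic_number : nat := chi_set setT.

Definition critical : Prop :=
  forall v : G, chi_set (setT :\ v) < chromatic_number.

Definition double_critical : Prop :=
  critical /\
  forall x y : G, adj x y -> chi_set (setT :\ x :\ y) <= chromatic_number - 2.

Definition complete : Prop := forall x y : G, x != y -> adj x y.

End Chrom.

(* The degree of a critical k-chromatic graph is at least k - 1; we show that a
   vertex v of degree k - 1 or k in a non-complete double-critical graph leads to
   a contradiction.  In a double-critical graph, the ends of every edge xy have at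
   least k - 2 common neighbours: an optimal colouring of G - x - y uses at least
   k - 2 colours, and a colour i missing from the common neighbourhood would let
   us give y and the i-coloured neighbours of x a fresh colour and then x the
   colour i, properly colouring G with k - 1 colours.  If two neighbours a, b of
   v were non-adjacent, then b would be adjacent to every other neighbour of v
   (otherwise v and b would have at most deg v - 3 <= k - 3 common neighbours),
   and the colour of b in an optimal colouring of G - v - a would have to occur
   among the common neighbours of v and a, on a vertex adjacent to b.  Hence
   N(v) is a clique, so v and N(v) form a clique of size at least k; since
   G - w has chromatic number below k for every w, this clique is all of G. *)
From mathcomp Require Import all_boot zify.
Set Implicit Arguments. Unset Strict Implicit. Unset Printing Implicit Defensive.

Lemma leq_card_cover (T : finType) (A : {set T}) (c : T -> nat) m :
  (forall i, i < m -> exists2 w, w \in A & c w = i) -> m <= #|A|.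
Proof.
move=> cover; rewrite -(size_iota 0 m) cardE -(size_map c).
apply: uniq_leq_size (iota_uniq 0 m) _ => i; rewrite mem_iota add0n.
by case/cover => w wA <-; apply: map_f; rewrite mem_enum.
Qed.

Section Colouring.
Variable G : sgraph.

Definition nbhd (v : G) : {set G} := [set w | adj v w].

Definition clique (K : {set G}) : Prop := {in K &, forall x y, x != y -> adj x y}.

Definition proper_on (S : {set G}) (c : G -> nat) : Prop :=
  {in S &, forall x y, adj x y -> c x != c y}.

Lemma in_nbhd (v w : G) : (w \in nbhd v) = adj v w.
Proof. by rewrite inE. Qed.

Lemma adj_neq (x y : G) : adj x y -> x != y.
Proof. by apply: contraTneq => ->; rewrite adj_irr. Qed.

Lemma proper_onS (S S' : {set G}) (c : G -> nat) :
  S \subset S' -> proper_on S' c -> proper_on S c.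
Proof. by move=> /subsetP sub cP x y xS yS; apply: cP; apply: sub. Qed.

Lemma colorable_of_proper (S : {set G}) m (c : G -> nat) :
  0 < m -> (forall z, c z < m) -> proper_on S c -> colorable S m.
Proof.
case: m => // m _ cb cP; apply/existsP; exists [ffun z => inord (c z)].
apply/forall_inP => x xS; apply/forall_inP => y yS; apply/implyP => xy.
rewrite !ffunE; apply: contra (cP x y xS yS xy) => /eqP/(congr1 val) /=.
by rewrite !inordK ?cb // => ->.
Qed.

Lemma proper_of_colorable (S : {set G}) m :
  colorable S m -> exists2 c : G -> nat, (forall z, c z < m) & proper_on S c.
Proof.
case/existsP => f /forall_inP fP.
exists (fun z => val (f z)) => [z | x y xS yS]; first exact: ltn_ord.
by move/forall_inP: (fP x xS) => /(_ y yS) /implyP.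
Qed.

Lemma proper_fresh_colour (S F : {set G}) m (c : G -> nat) :
  (forall z, c z < m) -> proper_on S c -> {in F &, forall p q, ~~ adj p q} ->
  proper_on (S :|: F) (fun z => if z \in F then m else c z).
Proof.
move=> cb cP Find x y; rewrite !inE => xSF ySF xy.
case xF: (x \in F); case yF: (y \in F).
- by move: xy; rewrite (negbTE (Find x y xF yF)).
- by rewrite eq_sym ltn_eqF.
- by rewrite ltn_eqF.
- by apply: cP xy; [move: xSF | move: ySF]; rewrite ?xF ?yF orbF.
Qed.

Lemma chi_set_colorable (S : {set G}) : colorable S (chi_set S).
Proof. by rewrite /chi_set; case: ex_minnP. Qed.

Lemma chi_set_min (S : {set G}) m : colorable S m -> chi_set S <= m.
Proof. by rewrite /chi_set; case: ex_minnP => n _; apply. Qed.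

Lemma chi_setU1 (z : G) (S : {set G}) : chi_set (z |: S) <= (chi_set S).+1.
Proof.
have [c cb cP] := proper_of_colorable (chi_set_colorable S).
apply/chi_set_min/(@colorable_of_proper _ _
  (fun x => if x \in [set z] then chi_set S else c x)).
- by [].
- by move=> x; case: ifP => _; rewrite ltnS // ltnW.
- rewrite setUC; apply: proper_fresh_colour cP _ => // x y /set1P-> /set1P->.
  by rewrite adj_irr.
Qed.

Lemma clique_card_leq_chi (S K : {set G}) : K \subset S -> clique K -> #|K| <= chi_set S.
Proof.
move=> /subsetP KS Kcl; have [c cb cP] := proper_of_colorable (chi_set_colorable S).
have c_inj : {in K &, injective c}.
  move=> x y xK yK cxy; apply/eqP/negPn/negP => xy.
  by move: (cP x y (KS x xK) (KS y yK) (Kcl x y xK yK xy)); rewrite cxy eqxx.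
rewrite cardE -(size_map c) -(size_iota 0 (chi_set S)).
apply: uniq_leq_size.
  by rewrite map_inj_in_uniq ?enum_uniq // => x y; rewrite !mem_enum; apply: c_inj.
by move=> _ /mapP [x _ ->]; rewrite mem_iota add0n cb.
Qed.

Lemma adj_chromatic_gt1 (x y : G) : adj x y -> 1 < chromatic_number G.
Proof.
move=> xy; have := @clique_card_leq_chi setT [set x; y] (subsetT _).
rewrite cards2 adj_neq //; apply=> u w /set2P [] -> /set2P [] ->; rewrite ?eqxx //.
by rewrite adj_sym.
Qed.

(* Giving [v] a colour missing from its neighbourhood would colour all of [G]. *)
Lemma nbhd_sees_all_colours (v : G) m (c : G -> nat) :
  m < chromatic_number G -> (forall z, c z < m) -> proper_on (setT :\ v) c ->
  forall i, i < m -> exists2 w, w \in nbhd v & c w = i.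
Proof.
move=> mlt cb cP i im.
have [/exists_inP [w wN /eqP cw] | /exists_inPn miss] :=
  boolP [exists w in nbhd v, c w == i]; first by exists w.
suff : chromatic_number G <= m by rewrite leqNgt mlt.
apply/chi_set_min/(@colorable_of_proper _ _ (fun z => if z == v then i else c z)).
- exact: leq_ltn_trans (leq0n i) im.
- by move=> z; case: ifP.
move=> x y _ _ xy; case: (eqVneq x v) => [xv|xv]; case: (eqVneq y v) => [yv|yv].
- by move: xy; rewrite xv yv adj_irr.
- by rewrite eq_sym; apply: miss; rewrite -xv in_nbhd.
- by apply: miss; rewrite -yv in_nbhd adj_sym.
- by apply: cP xy; rewrite !inE ?xv ?yv.
Qed.

Lemma common_nbhd_sees_all_colours (x y : G) m (c : G -> nat) :
  adj x y -> m <= chromatic_number G - 2 -> (forall z, c z < m) ->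
  proper_on (setT :\ x :\ y) c ->
  forall i, i < m -> exists2 w, w \in nbhd x :&: nbhd y & c w = i.
Proof.
move=> xy mle cb cP i im.
have [/exists_inP [w wN /eqP cw] | /exists_inPn miss] :=
  boolP [exists w in nbhd x :&: nbhd y, c w == i]; first by exists w.
set F := [set z | (z == y) || adj x z && (c z == i)].
have Find : {in F &, forall p q, ~~ adj p q}.
  have Fy p : adj x p -> c p == i -> ~~ adj y p.
    move=> xp cp; apply: contraTN cp => yp.
    by apply: miss; rewrite inE !in_nbhd xp yp.
  have inS p : adj x p -> p != y -> p \in setT :\ x :\ y.
    by move=> xp py; rewrite !inE py andbT eq_sym adj_neq.
  move=> p q; rewrite !inE => /orP [/eqP-> | /andP [xp cp]].
    by case/orP=> [/eqP-> | /andP [xq cq]]; [rewrite adj_irr | apply: Fy].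
  case/orP=> [/eqP-> | /andP [xq cq]]; first by rewrite adj_sym Fy.
  case: (eqVneq p y) => [-> | py]; first exact: Fy.
  case: (eqVneq q y) => [-> | qy]; first by rewrite adj_sym Fy.
  apply: contraTN cp => pq; rewrite -(eqP cq).
  exact: cP (inS p xp py) (inS q xq qy) pq.
have [w xw cw] : exists2 w, w \in nbhd x & (if w \in F then m else c w) = i.
  apply: (@nbhd_sees_all_colours x m.+1).
  - have := adj_chromatic_gt1 xy; lia.
  - by move=> z; case: ifP => _; rewrite ltnS // ltnW.
  - apply: proper_onS (proper_fresh_colour cb cP Find).
    by apply/subsetP => z; rewrite !inE andbT => ->; case: eqVneq.
  - exact: ltnW.
move: cw; case: ifP => [_ /eqP | wF cw]; first by rewrite gtn_eqF.
by move: wF; rewrite inE -in_nbhd xw cw eqxx orbT.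
Qed.

Lemma critical_deg (v : G) : critical G -> chromatic_number G <= #|nbhd v|.+1.
Proof.
move=> crit; have [c cb cP] := proper_of_colorable (chi_set_colorable (setT :\ v)).
have chiG : chromatic_number G <= (chi_set (setT :\ v)).+1.
  by rewrite /chromatic_number -{1}(setD1K (in_setT v)) chi_setU1.
have := leq_card_cover (nbhd_sees_all_colours (crit v) cb cP); lia.
Qed.

Lemma double_critical_common (x y : G) :
  double_critical G -> adj x y -> chromatic_number G - 2 <= #|nbhd x :&: nbhd y|.
Proof.
move=> [_ dcrit] xy.
have [c cb cP] := proper_of_colorable (chi_set_colorable (setT :\ x :\ y)).
have chiG : chromatic_number G <= (chi_set (setT :\ x :\ y)).+2.
  have yx : y \in setT :\ x by rewrite !inE eq_sym adj_neq.
  rewrite /chromatic_number -{1}(setD1K (in_setT x)) -{1}(setD1K yx).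
  by apply: leq_trans (chi_setU1 _ _) _; rewrite ltnS chi_setU1.
have := leq_card_cover (common_nbhd_sees_all_colours xy (dcrit x y xy) cb cP); lia.
Qed.

(* Otherwise [v] and [b] would have at most [deg v - 3] common neighbours. *)
Lemma low_degree_nbhd_adj (v a b w : G) :
  double_critical G -> #|nbhd v| <= chromatic_number G ->
  a \in nbhd v -> b \in nbhd v -> w \in nbhd v ->
  a != b -> ~~ adj a b -> w != a -> w != b -> adj b w.
Proof.
move=> dc low aN bN wN ab nab wa wb; apply/negPn/negP => nbw.
have sub : nbhd v :&: nbhd b \subset nbhd v :\ a :\ b :\ w.
  apply/subsetP => u; rewrite !inE => /andP [vu bu].
  have ua : u != a by apply: contraTneq bu => ->; rewrite adj_sym.
  have uw : u != w by apply: contraTneq bu => ->.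
  by rewrite ua uw eq_sym adj_neq.
have vb : adj v b by rewrite -in_nbhd.
have := subset_leq_card sub; have := double_critical_common dc vb.
have := cardsD1 a (nbhd v); have := cardsD1 b (nbhd v :\ a).
have := cardsD1 w (nbhd v :\ a :\ b).
rewrite !in_setD1 aN bN wN wa wb eq_sym ab /=; lia.
Qed.

Lemma low_degree_nbhd_clique (v : G) :
  double_critical G -> #|nbhd v| <= chromatic_number G -> clique (nbhd v).
Proof.
move=> dc low a b aN bN ab; apply/negPn/negP => nab.
have va : adj v a by rewrite -in_nbhd.
have vb : adj v b by rewrite -in_nbhd.
have [c cb cP] := proper_of_colorable (chi_set_colorable (setT :\ v :\ a)).
have inS u : adj v u -> u != a -> u \in setT :\ v :\ a.
  by move=> vu ua; rewrite !inE ua eq_sym adj_neq.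
have [w] := common_nbhd_sees_all_colours va (dc.2 v a va) cb cP (cb b).
rewrite inE !in_nbhd => /andP [vw aw] cw.
have wa : w != a by rewrite eq_sym adj_neq.
have wb : w != b by apply: contraTneq aw => ->.
have bw : adj b w.
  by apply: low_degree_nbhd_adj dc low aN bN _ ab nab wa wb; rewrite in_nbhd.
have ba : b != a by rewrite eq_sym.
by move: (cP b w (inS b vb ba) (inS w vw wa) bw); rewrite cw eqxx.
Qed.

Lemma complete_of_nbhd_clique (v : G) : critical G -> clique (nbhd v) -> complete G.
Proof.
move=> crit Ncl; set K := v |: nbhd v.
have Kcl : clique K.
  move=> x y /setU1P [-> | xN] /setU1P [-> | yN]; rewrite ?eqxx // => xy.
  - by rewrite -in_nbhd.
  - by rewrite adj_sym -in_nbhd.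
  - exact: Ncl.
suff KT w : w \in K by move=> x y; apply: Kcl (KT x) (KT y).
apply/negPn/negP => wK.
have sub : K \subset setT :\ w.
  by apply/subsetP => z zK; rewrite !inE andbT; apply: contraNneq wK => <-.
have := clique_card_leq_chi sub Kcl; have := crit w; have := critical_deg v crit.
rewrite cardsU1 in_nbhd adj_irr; lia.
Qed.

End Colouring.

Theorem proposition11 (G : sgraph) (k : nat) :
  chromatic_number G = k -> double_critical G -> ~ complete G ->
  forall v : G, k.+1 <= #|[set w : G | adj v w]|.
Proof.
move=> <- dc ncomplete v; rewrite ltnNge; apply/negP => low.
apply/ncomplete/(@complete_of_nbhd_clique _ v dc.1).
exact: low_degree_nbhd_clique.
Qed.
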